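(* Let $\mathbb{K}$ be a semiring. Every unambiguous one-way $\mathbb{K}$-automaton is equivalent to a deterministic two-way $\mathbb{K}$-automaton, i.e. both assign the same weight to every word of $A^*$.
   Context: A semiring $\mathbb{K}$ (not necessarily commutative) has addition $\oplus$ and multiplication $\otimes$ with the usual axioms. A one-way $\mathbb{K}$-automaton $(P,A,G,I',T')$ has finite state set $P$, partial $I',T':P\to\mathbb{K}$ (supports: initial/final states) and partial $G:P\times A\times P\to\mathbb{K}$ (support: transitions); its computations on $w=w_1\cdots w_n$ are paths $(q_0,w_1,q_1)\cdots(q_{n-1},w_n,q_n)$ of transitions from an initial to a final state, with weight $I'(q_0)\otimes G(q_0,w_1,q_1)\otimes\cdots\otimes G(q_{n-1},w_n,q_n)\otimes T'(q_n)$; the weight of $w$ is the sum of these. It is unambiguous if every word labels at most one computation. With $A_{\vdash\dashv}=A\cup\{\vdash,\dashv\}$ ($\vdash,\dashv$ fresh end-markers), a two-way $\mathbb{K}$-automaton $(Q,A,E,I,T)$ has finite state set $Q$, partial $I,T:Q\to\mathbb{K}$, and partial $E:Q\times(A_{\vdash\dashv}\times\{-1,+1\})\times Q\to\mathbb{K}$ whose support (the transitions) contains no $(p,\vdash,-1,q)$ nor $(p,\dashv,+1,q)$; for $t=(p,a,d,q)$: $\sigma(t)=p$, $\tau(t)=q$, $\lambda(t)=a$, $\delta(t)=d$. For $w=w_1\cdots w_n$ set $w_0=\vdash$, $w_{n+1}=\dashv$; a computation on $w$ is a sequence of configurations $((p_0,i_0),\dots,(p_k,i_k))$, $i_j\in[0;n+1]$,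 with $i_0=1$, $i_k=n+1$, $p_0$ initial, $p_k$ final, and transitions $t_j$ with $\sigma(t_j)=p_j$, $\tau(t_j)=p_{j+1}$, $\lambda(t_j)=w_{i_j}$, $i_{j+1}=i_j+\delta(t_j)$; its weight is $I(p_0)\otimes\bigotimes_{j=0}^{k-1}E(t_j)\otimes T(p_k)$, and the weight of $w$ is the sum of the weights of its computations. A two-way automaton is deterministic if (i) it has at most one initial state; (ii) for every state $p$ and every letter $a$ there is at most one transition outgoing from $p$ with label $a$; (iii) for every final state $p$ there is no transition outgoing from $p$ with label $\dashv$. *)

From HB Require Import structures.
From mathcomp Require Import all_boot all_algebra.
Set Implicit Arguments. Unset Strict Implicit. Unset Printing Implicit Defensive.
Import GRing.Theory.
Local Open Scope ring_scope.

(* Semiring K: a (not necessarily commutative) pzSemiRingType.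
   Partial maps X -> K are modelled as X -> option K (None = undefined). *)

Record oneway (K : pzSemiRingType) (A : finType) := OneWay {
  ow_state : finType;
  ow_trans : ow_state -> A -> ow_state -> option K;
  ow_init  : ow_state -> option K;
  ow_final : ow_state -> option K }.
Arguments ow_state {K A}. Arguments ow_trans {K A}. Arguments ow_init {K A}. Arguments ow_final {K A}.

Section OneWayDefs.
Variables (K : pzSemiRingType) (A : finType) (M : oneway K A).

Fixpoint ow_run (q : ow_state M) (w : seq A) (qs : seq (ow_state M)) : option K :=
  match w, qs with
  | [::], [::] => ow_final M q
  | a :: w', q' :: qs' =>
      match ow_trans M q a q', ow_run q' w' qs' with
      | Some x, Some y => Some (x * y)
      | _, _ => None
      end
  | _, _ => None
  end.

Definition ow_comp_weight (w : seq A) (q0 : ow_state M) (qs : seq (ow_state M))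
  : option K :=
  match ow_init M q0, ow_run q0 w qs with
  | Some x, Some y => Some (x * y)
  | _, _ => None
  end.

(* weight of w: sum over all computations (all other state sequences of
   length n+1 contribute 0) *)
Definition ow_weight (w : seq A) : K :=
  \sum_(q0 : ow_state M) \sum_(t : (size w).-tuple (ow_state M))
     odflt 0 (ow_comp_weight w q0 t).

Definition unambiguous : Prop :=
  forall (w : seq A) (q0 q0' : ow_state M) (qs qs' : seq (ow_state M)),
    isSome (ow_comp_weight w q0 qs) -> isSome (ow_comp_weight w q0' qs') ->
    q0 = q0' /\ qs = qs'.

End OneWayDefs.

Inductive emark (A : Type) := LEnd | REnd | Letter of A.
Arguments LEnd {A}. Arguments REnd {A}.

Inductive dir := Left | Right .

Record twoway (K : pzSemiRingType) (A : finType) := TwoWay {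
  tw_state : finType;
  tw_trans : tw_state -> emark A -> dir -> tw_state -> option K;
  tw_init  : tw_state -> option K;
  tw_final : tw_state -> option K;
  tw_noleft  : forall p q, tw_trans p LEnd Left q = None;
  tw_noright : forall p q, tw_trans p REnd Right q = None }.
Arguments tw_state {K A}. Arguments tw_trans {K A}. Arguments tw_init {K A}. Arguments tw_final {K A}.

Section TwoWayDefs.
Variables (K : pzSemiRingType) (A : finType) (M : twoway K A).

(* w_i for i in [0; n+1], with w_0 = |- and w_{n+1} = -| ; None outside *)
Definition tw_letter (w : seq A) (i : nat) : option (emark A) :=
  match i with
  | 0 => Some LEnd
  | i'.+1 => match onth w i' with
             | Some a => Some (Letter a)
             | None => if i' == size w then Some REnd else None
             end
  end.

Definition config := (tw_state M * nat)%type.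

Definition tw_step (w : seq A) (c c' : config) : option K :=
  match tw_letter w c.2 with
  | None => None
  | Some a =>
      if c'.2 == c.2.+1 then tw_trans M c.1 a Right c'.1
      else if c'.2.+1 == c.2 then tw_trans M c.1 a Left c'.1
      else None
  end.

Fixpoint tw_run (w : seq A) (c : config) (cs : seq config) : option K :=
  match cs with
  | [::] => if c.2 == (size w).+1 then tw_final M c.1 else None
  | c' :: cs' =>
      match tw_step w c c', tw_run w c' cs' with
      | Some x, Some y => Some (x * y)
      | _, _ => None
      end
  end.

Definition tw_comp_weight (w : seq A) (c0 : config) (cs : seq config) : option K :=
  if c0.2 == 1%N then
    match tw_init M c0.1, tw_run w c0 cs with
    | Some x, Some y => Some (x * y)
    | _, _ => None
    end
  else None.

(* "the weight of w is x": the computations on w form a finite set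
   whose weights sum to x *)
Definition tw_has_weight (w : seq A) (x : K) : Prop :=
  exists s : seq (config * seq config),
    uniq s /\
    (forall r, isSome (tw_comp_weight w r.1 r.2) <-> r \in s) /\
    x = \sum_(r <- s) odflt 0 (tw_comp_weight w r.1 r.2).

Definition deterministic : Prop :=
  [/\ (forall p q : tw_state M, isSome (tw_init M p) -> isSome (tw_init M q) -> p = q),
      (forall (p : tw_state M) (a : emark A) (d1 d2 : dir) (q1 q2 : tw_state M),
          isSome (tw_trans M p a d1 q1) -> isSome (tw_trans M p a d2 q2) ->
          d1 = d2 /\ q1 = q2)
    & (forall p : tw_state M, isSome (tw_final M p) ->
          forall d q, tw_trans M p REnd d q = None)].

End TwoWayDefs.

From HB Require Import structures.
From mathcomp Require Import all_boot all_algebra zify.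
Set Implicit Arguments. Unset Strict Implicit. Unset Printing Implicit Defensive.
Import GRing.Theory.
Local Open Scope ring_scope.

(* An unambiguous automaton has at most one accepting computation on w, and after
   k letters its state q_k is the only state reachable from q_(k-1) by w_(k-1) that
   lies in X k, the set of states from which the suffix drop k w can be accepted.
   The two-way automaton sweeps w from right to left to compute X 0, picks the
   unique initial state in it and then follows the computation from left to right,
   carrying q_k and X k.  To cross w_k it must know X (k+1), which is one of the
   candidates z with pre z w_k = X k.  If there are several, it walks right pulling
   every set back to position k+1 until a single candidate survives (the true one),
   then walks left pulling back the true candidate and a false one: their
   predecessor sets differ until, and coincide exactly at, position k+1, which is
   how the automaton finds its way back.  Every transition is forced, and the
   weights multiplied along the way are exactly those of the accepting computation. *)

Lemma drop_onth (T : Type) (s : seq T) k x :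
  onth s k = Some x -> drop k s = x :: drop k.+1 s.
Proof. by elim: s k => [|y s IH] [|k] //= => [[->]|/IH]; rewrite ?drop0. Qed.

Lemma onth_ltP (T : Type) (s : seq T) k : (k < size s)%N -> exists x, onth s k = Some x.
Proof. by rewrite -onthTE; case: onth => [x|] // _; exists x. Qed.

Lemma onth_size (T : Type) (s : seq T) k x : onth s k = Some x -> (k < size s)%N.
Proof. by move=> H; rewrite -onthTE H. Qed.

Lemma take_drop_rcons (T : Type) (s : seq T) m d x : onth s (m + d) = Some x ->
  take d.+1 (drop m s) = rcons (take d (drop m s)) x.
Proof.
move=> Hx; rewrite (take_nth x) ?size_drop; last by have := onth_size Hx; lia.
by rewrite nth_drop; congr rcons; apply: onth_nth.
Qed.

Lemma pick_card1 (T : finType) (S : {set T}) z :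
  z \in S -> (#|S| < 2)%N -> [pick x in S] = Some z.
Proof.
move=> Hz Hc; have /card_le1P H : (#|S| <= 1)%N by [].
case: pickP => [x Hx|H0]; last by have := H0 z; rewrite Hz.
by have := H _ Hz x; rewrite Hx inE => /esym /eqP ->.
Qed.

Section TwoWayPaths.
Variables (K : pzSemiRingType) (A : finType) (M : twoway K A).
Implicit Types (w : seq A) (c : config M) (cs : seq (config M)).

Fixpoint tw_path w c cs : option K :=
  match cs with
  | [::] => Some 1
  | c' :: cs' => match tw_step w c c', tw_path w c' cs' with
                 | Some x, Some y => Some (x * y) | _, _ => None end
  end.

Definition tw_reach w c c' (x : K) :=
  exists cs, tw_path w c cs = Some x /\ last c cs = c'.

Lemma tw_reach_refl w c : tw_reach w c c 1.
Proof. by exists [::]. Qed.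

Lemma tw_reach_step w c c1 c2 x y :
  tw_step w c c1 = Some x -> tw_reach w c1 c2 y -> tw_reach w c c2 (x * y).
Proof. by move=> Ex [cs [Ey <-]]; exists (c1 :: cs); rewrite /= Ex Ey. Qed.

Lemma tw_path_cat w c cs cs' x y :
  tw_path w c cs = Some x -> tw_path w (last c cs) cs' = Some y ->
  tw_path w c (cs ++ cs') = Some (x * y).
Proof.
elim: cs c x => [|c1 cs IH] c x /=; first by case=> <- ->; rewrite mul1r.
case: tw_step => [u|] //; case Ev: tw_path => [v|] //= [<-] Ey.
by rewrite (IH _ _ Ev Ey) mulrA.
Qed.

Lemma tw_reach_trans w c1 c2 c3 x y :
  tw_reach w c1 c2 x -> tw_reach w c2 c3 y -> tw_reach w c1 c3 (x * y).
Proof.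
move=> [cs [Ex <-]] [cs' [Ey <-]]; exists (cs ++ cs').
by rewrite last_cat (tw_path_cat Ex Ey).
Qed.

Lemma tw_reach_run w c c' cs' x y :
  tw_reach w c c' x -> tw_run w c' cs' = Some y ->
  exists cs, tw_run w c cs = Some (x * y).
Proof.
move=> [cs [Ex <-]] Ey; exists (cs ++ cs').
elim: cs c x Ex Ey => [|c1 cs IH] c x /=; first by case=> <- ->; rewrite mul1r.
case: tw_step => [u|] //; case Ev: tw_path => [v|] //= [<-] Ey.
by rewrite (IH _ _ Ev Ey) mulrA.
Qed.

Lemma tw_comp_weightE w c cs :
  isSome (tw_comp_weight w c cs) =
  [&& c.2 == 1%N, isSome (tw_init M c.1) & isSome (tw_run w c cs)].
Proof.
by rewrite /tw_comp_weight; case: eqP => //= _; case: tw_init => [?|] //; case: tw_run.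
Qed.

End TwoWayPaths.

Lemma tw_letter_end (A : finType) (w : seq A) : tw_letter w (size w).+1 = Some REnd.
Proof. by rewrite /= onth_default // eqxx. Qed.

Lemma tw_letter_onth (A : finType) (w : seq A) k a :
  onth w k = Some a -> tw_letter w k.+1 = Some (Letter a).
Proof. by move=> /= ->. Qed.

Section Deterministic.
Variables (K : pzSemiRingType) (A : finType) (M : twoway K A).
Hypothesis detM : deterministic M.
Implicit Types (w : seq A) (c : config M) (cs : seq (config M)).

Lemma det_step_fun w c c1 c2 :
  isSome (tw_step w c c1) -> isSome (tw_step w c c2) -> c1 = c2.
Proof.
case: detM => _ trans_det _; case: c c1 c2 => p i [q1 i1] [q2 i2].
rewrite /tw_step /=; case: tw_letter => // e.
case: eqP => E1; [| case: eqP => E1' //];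
  case: eqP => E2; try case: eqP => E2' //;
  by move=> H1 H2; case: (trans_det _ _ _ _ _ _ H1 H2) => // _ ->; congr pair; lia.
Qed.

Lemma det_final_stuck w c c' :
  c.2 = (size w).+1 -> isSome (tw_final M c.1) -> tw_step w c c' = None.
Proof.
case: detM => _ _ final_det Ec /final_det Hd.
by rewrite /tw_step Ec tw_letter_end; do 2 case: ifP => _ //; rewrite Hd.
Qed.

Lemma det_run_unique w c cs cs' :
  isSome (tw_run w c cs) -> isSome (tw_run w c cs') -> cs = cs'.
Proof.
elim: cs c cs' => [|c1 cs IH] c [|c2 cs'] //=.
- by case: eqP => // Ec Hf; rewrite (det_final_stuck _ Ec Hf).
- by move=> Hs; case: eqP => // Ec Hf; move: Hs; rewrite (det_final_stuck _ Ec Hf).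
- case E1: tw_step => [x|] //; case R1: tw_run => [r1|] // _.
  case E2: tw_step => [y|] //; case R2: tw_run => [r2|] // _.
  have Ec : c1 = c2 by apply: (det_step_fun (w := w) (c := c)); rewrite ?E1 ?E2.
  by rewrite Ec in R1 *; rewrite (IH c2 cs') ?R1 ?R2.
Qed.

Lemma det_has_weight w c cs x :
  tw_comp_weight w c cs = Some x -> tw_has_weight M w x.
Proof.
case: detM => init_det _ _ Ex; exists [:: (c, cs)]; split=> //; split; last first.
  by rewrite big_seq1 Ex.
have := isT : isSome (Some x); rewrite -Ex tw_comp_weightE => /and3P [/eqP c2 c1 Hc].
move=> [c' cs']; rewrite inE /= tw_comp_weightE; split; last first.
  by move=> /eqP [-> ->]; rewrite c2 c1.
case/and3P=> /eqP c'2 /(init_det _ _)/(_ c1) c'1 Hc'.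
have Ec : c' = c.
  by move: c'2 c'1 c2; case: (c') => [? ?]; case: (c) => [? ?] /= -> -> ->.
by rewrite Ec in Hc' *; rewrite (det_run_unique Hc' Hc).
Qed.

End Deterministic.

Section OneWayRuns.
Variables (K : pzSemiRingType) (A : finType) (M : oneway K A).
Local Notation P := (ow_state M).
Implicit Types (X : {set P}) (u : seq A) (q s : P) (qs : seq P).

Definition pre X (a : A) : {set P} :=
  [set s | [exists s', isSome (ow_trans M s a s') && (s' \in X)]].

Definition pre_word X u : {set P} := foldr (fun a Y => pre Y a) X u.

Definition coacc u : {set P} := pre_word [set s | isSome (ow_final M s)] u.

Lemma pre_word_cat X u v : pre_word X (u ++ v) = pre_word (pre_word X v) u.
Proof. exact: foldr_cat. Qed.

Lemma coacc_cat u v : coacc (u ++ v) = pre_word (coacc v) u.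
Proof. exact: pre_word_cat. Qed.

Lemma coacc_cons a u : coacc (a :: u) = pre (coacc u) a.
Proof. by []. Qed.

Lemma ow_run_size q u qs : isSome (ow_run q u qs) -> size qs = size u.
Proof.
elim: u q qs => [|a u IH] q [|r qs] //=.
by case: ow_trans => // x; case R: ow_run => // _; rewrite (IH r qs) ?R.
Qed.

Lemma coaccP q u : reflect (exists qs, isSome (ow_run q u qs)) (q \in coacc u).
Proof.
apply: (iffP idP).
  elim: u q => [|a u IH] q; first by rewrite inE; exists [::].
  rewrite coacc_cons inE => /existsP [r /andP [Hq /IH [qs Hr]]]; exists (r :: qs).
  by move: Hq Hr => /=; case: ow_trans => // x _; case: ow_run.
case=> qs; elim: u q qs => [|a u IH] q [|r qs] //=; first by rewrite inE.
case Ex: ow_trans => [x|] //; case R: ow_run => // _.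
by rewrite inE; apply/existsP; exists r; rewrite Ex (IH r qs) ?R.
Qed.

Lemma ow_run_drop q u qs k : isSome (ow_run q u qs) -> (k <= size u)%N ->
  isSome (ow_run (nth q (q :: qs) k) (drop k u) (drop k qs)).
Proof.
elim: u q qs k => [|a u IH] q [|r qs] [|k] //=; rewrite ?drop0 //.
case: ow_trans => // x; case R: ow_run => // _ Hk.
by rewrite (set_nth_default r) /= ?(@ow_run_size r u qs) ?R //; apply: IH; rewrite ?R.
Qed.
Lemma ow_run_splice q u v qs qs' qs'' : size qs = size u ->
  isSome (ow_run q (u ++ v) (qs ++ qs')) -> isSome (ow_run (last q qs) v qs'') ->
  isSome (ow_run q (u ++ v) (qs ++ qs'')).
Proof.
elim: u q qs => [|a u IH] q [|r qs] //= [Hs].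
case: ow_trans => // x; case R: ow_run => // _ H.
by have := IH r qs Hs; rewrite R => /(_ isT H); case: ow_run.
Qed.

Lemma ow_comp_weightE w q qs :
  isSome (ow_comp_weight w q qs) = isSome (ow_init M q) && isSome (ow_run q w qs).
Proof. by rewrite /ow_comp_weight; case: ow_init => //; case: ow_run. Qed.

End OneWayRuns.

Section UniqueComputation.
Variables (K : pzSemiRingType) (A : finType) (M : oneway K A).
Local Notation P := (ow_state M).
Hypothesis unambM : unambiguous M.
Variables (w : seq A) (q0 : P) (qs : seq P).
Hypothesis comp_q : isSome (ow_comp_weight w q0 qs).
Local Notation n := (size w).

Definition comp_state k := nth q0 (q0 :: qs) k.

Lemma comp_run : isSome (ow_run q0 w qs).
Proof. by move: comp_q; rewrite ow_comp_weightE => /andP []. Qed.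

Lemma size_comp : size qs = n.
Proof. exact: ow_run_size comp_run. Qed.

Lemma comp_state_run k : (k <= n)%N ->
  isSome (ow_run (comp_state k) (drop k w) (drop k qs)).
Proof. exact: ow_run_drop comp_run. Qed.

Lemma comp_state_coacc k : (k <= n)%N -> comp_state k \in coacc M (drop k w).
Proof. by move=> Hk; apply/coaccP; exists (drop k qs); apply: comp_state_run. Qed.

Lemma drop_comp k : (k < n)%N -> drop k qs = comp_state k.+1 :: drop k.+1 qs.
Proof. by move=> Hk; rewrite (drop_nth q0) ?size_comp. Qed.

Lemma comp_state_trans k a : onth w k = Some a ->
  isSome (ow_trans M (comp_state k) a (comp_state k.+1)).
Proof.
move=> Ha; have Hk := onth_size Ha; have := comp_state_run (ltnW Hk).
by rewrite (drop_onth Ha) drop_comp //=; case: ow_trans.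
Qed.

Lemma comp_state_succ_unique k a s : onth w k = Some a ->
  isSome (ow_trans M (comp_state k) a s) -> s \in coacc M (drop k.+1 w) ->
  s = comp_state k.+1.
Proof.
move=> Ha Hs /coaccP [rs Hrs]; have Hk := ltnW (onth_size Ha).
have size_take_qs : size (take k qs) = k by rewrite size_takel // size_comp.
have Hrun : isSome (ow_run q0 w (take k qs ++ s :: rs)).
  rewrite -(cat_take_drop k w); apply: (ow_run_splice (qs' := drop k qs)).
  - by rewrite size_take_qs size_takel.
  - by rewrite !cat_take_drop comp_run.
  have -> : last q0 (take k qs) = comp_state k.
    rewrite (last_nth q0) size_take_qs /comp_state.
    by case: (k) => [|j] //=; rewrite nth_take.
  by rewrite (drop_onth Ha) /=; case: ow_trans Hs => // x _; case: ow_run Hrs.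
have comp_s : isSome (ow_comp_weight w q0 (take k qs ++ s :: rs)).
  by move: comp_q; rewrite !ow_comp_weightE Hrun andbT => /andP [].
have [_ Eqs] := unambM comp_s comp_q.
by rewrite /comp_state -Eqs /= nth_cat size_take_qs ltnn subnn.
Qed.

Lemma comp_state0_unique s : isSome (ow_init M s) -> s \in coacc M w -> s = q0.
Proof.
move=> Hi /coaccP [rs Hrs].
have comp_s : isSome (ow_comp_weight w s rs) by rewrite ow_comp_weightE Hi.
by have [] := unambM comp_s comp_q.
Qed.

Lemma ow_weight_comp : ow_weight M w = odflt 0 (ow_comp_weight w q0 qs).
Proof.
have size_qs : size qs == n by rewrite size_comp.
rewrite /ow_weight (bigD1 q0) //= (bigD1 (Tuple size_qs)) //=.
rewrite [X in _ + X + _]big1 => [|t /negP Ht]; last first.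
  case E: ow_comp_weight => [x|] //; case: Ht; apply/eqP/val_inj.
  have comp_t : isSome (ow_comp_weight w q0 t) by rewrite E.
  by have [_ Et] := unambM comp_q comp_t.
rewrite [X in _ + X]big1 ?addr0 // => q /negP Hq; apply: big1 => t _.
case E: ow_comp_weight => [x|] //; case: Hq; apply/eqP.
have comp_t : isSome (ow_comp_weight w q t) by rewrite E.
by have [->] := unambM comp_q comp_t.
Qed.

End UniqueComputation.

Definition bool_of_dir (d : dir) := if d is Right then true else false.
Definition dir_of_bool (b : bool) := if b then Right else Left.
Lemma bool_of_dirK : cancel bool_of_dir dir_of_bool. Proof. by case. Qed.
HB.instance Definition _ := Equality.copy dir (can_type bool_of_dirK).

Section Construction.
Variables (K : pzSemiRingType) (A : finType) (M : oneway K A).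
Local Notation P := (ow_state M).
Local Notation pre := (@pre K A M).

(* Invariants along the run on w, where position m reads w_(m-1):
   - [Sweep (X m)] at position m;
   - [Follow q_k (X k)] at position k+1;
   - [Look q_k C f] at position k+2+d, where C is the set of candidates z with
     pre z w_k = X k and f pulls a set at position k+1+d back to position k+1;
   - [Return q_k (X (k+1)) y y'] at position k+1+d, where y and y' pull back to
     the true candidate X (k+1) and to a false one.
   [Zero] ends the run with weight 0 when w has no accepting computation. *)
Inductive state :=
  | Scan
  | Sweep of {set P}
  | Zero
  | Follow of P & {set P}
  | Look of P & {set {set P}} & {ffun {set P} -> {set P}}
  | Return of P & {set P} & {set P} & {set P}.

Definition state_code s :=
  match s with
  | Scan => inl (inl (inl (inl true)))
  | Zero => inl (inl (inl (inl false)))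
  | Sweep X => inl (inl (inl (inr X)))
  | Follow q X => inl (inl (inr (q, X)))
  | Look q C f => inl (inr (q, C, f))
  | Return q z y y' => inr (q, z, y, y')
  end : bool + {set P} + (P * {set P}) + (P * {set {set P}} * {ffun {set P} -> {set P}})
        + (P * {set P} * {set P} * {set P}).

Definition state_decode c :=
  match c with
  | inl (inl (inl (inl b))) => if b then Scan else Zero
  | inl (inl (inl (inr X))) => Sweep X
  | inl (inl (inr (q, X))) => Follow q X
  | inl (inr (q, C, f)) => Look q C f
  | inr (q, z, y, y') => Return q z y y'
  end.

Lemma state_codeK : cancel state_code state_decode. Proof. by case. Qed.
HB.instance Definition _ := Finite.copy state (can_type state_codeK).

Definition alive (C : {set {set P}}) (f : {ffun {set P} -> {set P}}) : {set {set P}} :=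
  [set z in C | [exists x, f x == z]].

Definition advance q a (z : {set P}) : option (dir * state * K) :=
  if [pick s | isSome (ow_trans M q a s) && (s \in z)] is Some s then
    if ow_trans M q a s is Some x then Some (Right, Follow s z, x) else None
  else None.

Definition turn_back q (f : {ffun {set P} -> {set P}}) (S : {set {set P}}) z
  : option (dir * state * K) :=
  match [pick z' in S | z' != z], [pick y | f y == z] with
  | Some z', Some y =>
      if [pick y' | f y' == z'] is Some y' then Some (Left, Return q z y y', 1)
      else None
  | _, _ => None
  end.

Definition sim_next s e : option (dir * state * K) :=
  match s, e with
  | Scan, Letter _ => Some (Right, Scan, 1)
  | Scan, REnd => Some (Left, Sweep (coacc M [::]), 1)
  | Sweep X, Letter a => Some (Left, Sweep (pre X a), 1)
  | Sweep X, LEnd =>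
      if [pick s | isSome (ow_init M s) && (s \in X)] is Some s
      then Some (Right, Follow s X, odflt 0 (ow_init M s))
      else Some (Right, Zero, 0)
  | Zero, Letter _ => Some (Right, Zero, 1)
  | Follow q X, Letter a =>
      let C := [set z | pre z a == X] in
      if (2 <= #|C|)%N then Some (Right, Look q C [ffun x => x], 1)
      else if [pick z in C] is Some z then advance q a z else None
  | Look q C f, Letter c =>
      let f' := [ffun x => f (pre x c)] in
      if (2 <= #|alive C f'|)%N then Some (Right, Look q C f', 1)
      else if [pick z in alive C f'] is Some z then turn_back q f (alive C f) z
      else None
  | Look q C f, REnd => turn_back q f (alive C f) (f (coacc M [::]))
  | Return q z y y', Letter c =>
      if pre y c == pre y' c then advance q c z
      else Some (Left, Return q z (pre y c) (pre y' c), 1)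
  | _, _ => None
  end.

Definition sim_trans s e d s' : option K :=
  if sim_next s e is Some (d', s'', x) then
    if (d == d') && (s' == s'') then Some x else None
  else None.

Definition sim_init s : option K := if s is Scan then Some 1 else None.

Definition sim_final s : option K :=
  match s with Zero => Some 1 | Follow q _ => ow_final M q | _ => None end.

Lemma sim_next_LEnd s d s' x : sim_next s LEnd = Some (d, s', x) -> d = Right.
Proof. by case: s => //= X; case: pickP => [? _|_] [<-]. Qed.

Lemma sim_next_REnd s d s' x : sim_next s REnd = Some (d, s', x) -> d = Left.
Proof.
case: s => //= [[<-] // | q C f]; rewrite /turn_back.
by case: pickP => // ? _; case: pickP => // ? _; case: pickP => // ? _ [<-].
Qed.

Lemma sim_trans_LEnd_Left s s' : sim_trans s LEnd Left s' = None.
Proof.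
by rewrite /sim_trans; case E: sim_next => [[[d s''] x]|] //; rewrite (sim_next_LEnd E).
Qed.

Lemma sim_trans_REnd_Right s s' : sim_trans s REnd Right s' = None.
Proof.
by rewrite /sim_trans; case E: sim_next => [[[d s''] x]|] //; rewrite (sim_next_REnd E).
Qed.

Definition simulator : twoway K A :=
  @TwoWay K A state sim_trans sim_init sim_final
          sim_trans_LEnd_Left sim_trans_REnd_Right.

Lemma simulator_deterministic : deterministic simulator.
Proof.
split=> /=.
- by case=> // - [].
- move=> p e d1 d2 q1 q2; rewrite /sim_trans; case: sim_next => [[[d q] x]|] //.
  by do 2 case: andP => // - [/eqP -> /eqP ->].
- by case=> // q X _ d q'; rewrite /sim_trans.
Qed.

Lemma turn_back_spec q (f : {ffun {set P} -> {set P}}) (S : {set {set P}}) z :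
  z \in codom f -> (exists2 z', z' \in S & z' != z) -> {subset S <= codom f} ->
  exists y y', [/\ turn_back q f S z = Some (Left, Return q z y y', 1),
                   f y = z, f y' \in S & f y' != z].
Proof.
move=> /codomP [x ->] [z0 Sz0 z0_neq] S_f; rewrite /turn_back.
case: pickP => [z' /andP [Sz' z'_neq] | none]; last first.
  by have := none z0; rewrite Sz0 z0_neq.
case: pickP => [y /eqP fy | none]; last by have := none x; rewrite eqxx.
case: pickP => [y' /eqP fy' | none]; last first.
  by have /codomP [x' Ex'] := S_f _ Sz'; have := none x'; rewrite Ex' eqxx.
by exists y, y'; rewrite fy fy'.
Qed.

End Construction.

Section Simulation.
Variables (K : pzSemiRingType) (A : finType) (M : oneway K A).
Local Notation P := (ow_state M).
Local Notation pre := (@pre K A M).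
Local Notation S := (simulator M).
Variable w : seq A.
Local Notation n := (size w).
Local Notation reach := (@tw_reach K A S w).
Local Notation X m := (coacc M (drop m w)).

Lemma coacc_pre k a : onth w k = Some a -> pre (X k.+1) a = X k.
Proof. by move=> Ha; rewrite (drop_onth Ha). Qed.

Lemma coacc_window m d : pre_word (X (m + d)) (take d (drop m w)) = X m.
Proof. by rewrite -coacc_cat -{2}(cat_take_drop d (drop m w)) drop_drop addnC. Qed.

Lemma reach_right s i e s' c x y : tw_letter w i = Some e ->
  sim_next s e = Some (Right, s', x) -> reach (s', i.+1) c y -> reach (s, i) c (x * y).
Proof.
move=> He Hs; apply: tw_reach_step.
by rewrite /tw_step He /= eqxx /sim_trans Hs !eqxx.
Qed.

Lemma reach_left s i e s' c x y : tw_letter w i.+1 = Some e ->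
  sim_next s e = Some (Left, s', x) -> reach (s', i) c y -> reach (s, i.+1) c (x * y).
Proof.
move=> He Hs; apply: tw_reach_step.
rewrite /tw_step He /= /sim_trans Hs !eqxx.
by have -> : (i == i.+2) = false by lia.
Qed.

Lemma reach_drift s i : (forall a, sim_next s (Letter a) = Some (Right, s, 1)) ->
  (i <= n)%N -> reach (s, i.+1) (s, n.+1) 1.
Proof.
move=> Hs; move Ej : (n - i)%N => j; elim: j i Ej => [|j IH] i Ej Hi.
  have Ein : i = n by lia.
  by rewrite Ein; exact: tw_reach_refl.
have /onth_ltP [a Ha] : (i < n)%N by lia.
rewrite -[1]mul1r; apply: reach_right (tw_letter_onth Ha) (Hs a) (IH _ _ _); lia.
Qed.

Lemma reach_sweep l : (l <= n)%N -> reach (Sweep (X l), l) (Sweep (X 0), 0) 1.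
Proof.
elim: l => [|l IH] Hl; first exact: tw_reach_refl.
have [a Ha] := onth_ltP Hl.
rewrite -[1]mul1r; apply: reach_left (tw_letter_onth Ha) _ (IH (ltnW Hl)).
by rewrite /= (coacc_pre Ha).
Qed.

Lemma reach_scan_sweep : reach (Scan M, 1%N) (Sweep (X 0), 0) 1.
Proof.
rewrite -[1]mul1r; apply: tw_reach_trans (reach_drift _ (leq0n n)) _ => //.
rewrite -[1]mul1r; apply: reach_left (tw_letter_end w) _ (reach_sweep (leqnn n)).
by rewrite /= drop_size.
Qed.

Lemma simulator_has_weight cs x :
  @tw_run K A S w (Scan M, 1%N) cs = Some x -> tw_has_weight S w x.
Proof.
move=> Ex.
apply: (det_has_weight (simulator_deterministic M) (c := (Scan M, 1%N)) (cs := cs)).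
by rewrite /tw_comp_weight /= Ex mul1r.
Qed.

Section FollowComputation.
Hypothesis unambM : unambiguous M.
Variables (q0 : P) (qs : seq P).
Hypothesis comp_q : isSome (ow_comp_weight w q0 qs).
Local Notation cs := (comp_state q0 qs).

Lemma advance_comp k a : onth w k = Some a -> exists2 g,
  ow_trans M (cs k) a (cs k.+1) = Some g &
  advance (cs k) a (X k.+1) = Some (Right, Follow (cs k.+1) (X k.+1), g).
Proof.
move=> Ha; case Eg: ow_trans (comp_state_trans comp_q Ha) => [g|] // _.
exists g => //; rewrite /advance; case: pickP => [s /andP [Hs Xs] | none].
  by rewrite (comp_state_succ_unique unambM comp_q Ha Hs Xs) Eg.
by have := none (cs k.+1); rewrite Eg comp_state_coacc // (onth_size Ha).
Qed.

Section Lookahead.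
Variables (k : nat) (a : A).
Hypothesis Ha : onth w k = Some a.
Local Notation C := [set z | pre z a == X k].
Local Notation window d := (take d (drop k.+1 w)).

Lemma pre_window d c y : onth w (k.+1 + d) = Some c ->
  pre_word y (window d.+1) = pre_word (pre y c) (window d).
Proof. by move=> Hc; rewrite (take_drop_rcons Hc) -cats1 pre_word_cat. Qed.

Definition return_inv d (y y' : {set P}) :=
  [/\ (k.+1 + d <= n)%N, pre_word y (window d) = X k.+1,
      pre_word y' (window d) \in C & pre_word y' (window d) != X k.+1].

Lemma reach_return g : ow_trans M (cs k) a (cs k.+1) = Some g ->
  forall d y y', return_inv d y y' ->
  reach (Return (cs k) (X k.+1) y y', k.+1 + d)%N (Follow (cs k.+1) (X k.+1), k.+2) g.
Proof.
move=> Eg; elim=> [|d IH] y y' [Hd Hy Hy'C Hy'].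
  move: Hy Hy'C Hy'; rewrite take0 /= => -> Hy'C _; rewrite inE in Hy'C.
  have [g' Eg' Hadv] := advance_comp Ha; move: Eg'; rewrite Eg => -[Eg']; subst g'.
  rewrite addn0 -[g]mulr1; apply: reach_right (tw_letter_onth Ha) _ (tw_reach_refl _ _).
  by rewrite /= (eqP Hy'C) -(coacc_pre Ha) eqxx.
have /onth_ltP [c Hc] : (k.+1 + d < n)%N by lia.
move: Hy Hy'C Hy'; rewrite !(pre_window _ Hc) => Hy Hy'C Hy'.
have Hstep : sim_next (Return (cs k) (X k.+1) y y') (Letter c) =
             Some (Left, Return (cs k) (X k.+1) (pre y c) (pre y' c), 1).
  by rewrite /=; case: eqP => // Eyy'; move: Hy'; rewrite -Eyy' Hy eqxx.
rewrite addnS -[g]mul1r; apply: reach_left (tw_letter_onth Hc) Hstep (IH _ _ _).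
by split => //; lia.
Qed.

Lemma turn_back_window d (f : {ffun {set P} -> {set P}}) :
  (forall x, f x = pre_word x (window d)) -> (k.+1 + d <= n)%N ->
  (2 <= #|alive C f|)%N -> exists y y',
  turn_back (cs k) f (alive C f) (X k.+1) = Some (Left, Return (cs k) (X k.+1) y y', 1)
  /\ return_inv d y y'.
Proof.
move=> Hf Hd; case/card_gt1P=> z1 [z2 [z1A z2A z12]].
have Xf : X k.+1 \in codom f.
  by apply/codomP; exists (X (k.+1 + d)); rewrite Hf coacc_window.
have [||y [y' [Eb fy fy'A fy'X]]] := @turn_back_spec _ _ _ (cs k) f (alive C f) _ Xf.
- case: (z1 =P X k.+1) => [E1 | /eqP]; last by exists z1.
  by exists z2; rewrite // -E1 eq_sym.
- by move=> z; rewrite inE => /andP [_ /existsP [x /eqP <-]]; apply: codom_f.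
exists y, y'; split=> //; rewrite /return_inv -!Hf; split=> //.
by move: fy'A; rewrite inE => /andP [].
Qed.

Lemma reach_look d (f : {ffun {set P} -> {set P}}) :
  (k.+1 + d <= n)%N -> (forall x, f x = pre_word x (window d)) ->
  (2 <= #|alive C f|)%N -> exists y y' d',
  reach (Look (cs k) C f, (k.+1 + d).+1) (Return (cs k) (X k.+1) y y', k.+1 + d')%N 1
  /\ return_inv d' y y'.
Proof.
move Ee : (n - (k.+1 + d))%N => e; elim: e d f Ee => [|e IH] d f Ee Hd Hf H2.
  have He : (k.+1 + d)%N = n by lia.
  have [y [y' [Eb Hinv]]] := turn_back_window Hf Hd H2.
  exists y, y', d; split=> //; rewrite -[1]mulr1.
  apply: reach_left (_ : tw_letter w (k.+1 + d).+1 = Some REnd) _ (tw_reach_refl _ _).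
    by rewrite He tw_letter_end.
  by rewrite -Eb -(coacc_window k.+1 d) -Hf He drop_size.
have /onth_ltP [c Hc] : (k.+1 + d < n)%N by lia.
set f' := [ffun x => f (pre x c)].
have Hf' x : f' x = pre_word x (window d.+1) by rewrite ffunE Hf (pre_window _ Hc).
case: (leqP 2 #|alive C f'|) => H2'.
  have [y [y' [d' [R Hinv]]]] := IH d.+1 f' ltac:(lia) ltac:(lia) Hf' H2'.
  exists y, y', d'; split=> //; rewrite -[1]mul1r.
  by apply: reach_right (tw_letter_onth Hc) _ _; rewrite /= -/f' ?H2' // -addnS.
have Xf' : X k.+1 \in alive C f'.
  rewrite !inE -(coacc_pre Ha) eqxx; apply/existsP; exists (X (k.+1 + d.+1)).
  by rewrite Hf' coacc_window.
have [y [y' [Eb Hinv]]] := turn_back_window Hf Hd H2.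
exists y, y', d; split=> //; rewrite -[1]mulr1.
apply: reach_left (tw_letter_onth Hc) _ (tw_reach_refl _ _).
by rewrite /= -/f' leqNgt H2' /= (pick_card1 Xf' H2') Eb.
Qed.

Lemma reach_follow : exists2 g, ow_trans M (cs k) a (cs k.+1) = Some g &
  reach (Follow (cs k) (X k), k.+1) (Follow (cs k.+1) (X k.+1), k.+2) g.
Proof.
have [g Eg Hadv] := advance_comp Ha; exists g => //.
have XC : X k.+1 \in C by rewrite inE (coacc_pre Ha).
case: (leqP 2 #|C|) => HC; last first.
  rewrite -[g]mulr1; apply: reach_right (tw_letter_onth Ha) _ (tw_reach_refl _ _).
  by rewrite /= leqNgt HC /= (pick_card1 XC HC).
have alive_id : alive C [ffun x => x] = C.
  apply/setP => z; rewrite !inE andb_idr // => _.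
  by apply/existsP; exists z; rewrite ffunE.
have [|||y [y' [d' [R Hinv]]]] := @reach_look 0 [ffun x => x].
- by rewrite addn0 (onth_size Ha).
- by move=> x; rewrite ffunE take0.
- by rewrite alive_id.
rewrite -[g]mul1r; apply: reach_right (tw_letter_onth Ha) _ _; first by rewrite /= HC.
rewrite -[g]mul1r; apply: tw_reach_trans (_ : reach _ _ 1) (reach_return Eg Hinv).
by rewrite addn0 in R.
Qed.

End Lookahead.

Lemma run_follow k : (k <= n)%N -> exists cs',
  @tw_run K A S w (Follow (cs k) (X k), k.+1) cs' =
  ow_run (cs k) (drop k w) (drop k qs).
Proof.
move Ej : (n - k)%N => j; elim: j k Ej => [|j IH] k Ej Hk.
  have -> : k = n by lia.
  by exists [::]; rewrite /= eqxx drop_size drop_oversize // (size_comp comp_q).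
have /onth_ltP [a Ha] : (k < n)%N by lia.
have Hk1 : (k.+1 <= n)%N by lia.
have [g Eg Rk] := reach_follow Ha.
have [cs' Ecs'] := IH k.+1 ltac:(lia) Hk1.
case Ey: ow_run (comp_state_run comp_q Hk1) Ecs' => [y|] // _ Ecs'.
have [cs'' Ecs''] := tw_reach_run Rk Ecs'.
by exists cs''; rewrite Ecs'' (drop_onth Ha) (drop_comp comp_q) //= Eg Ey.
Qed.

Lemma reach_start : exists2 i0, ow_init M q0 = Some i0 &
  reach (Scan M, 1%N) (Follow q0 (X 0), 1%N) i0.
Proof.
move: comp_q; rewrite ow_comp_weightE; case Ei: ow_init => [i0|] // _.
exists i0 => //; rewrite -[i0]mul1r; apply: tw_reach_trans reach_scan_sweep _.
rewrite -[i0]mulr1.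
apply: reach_right (_ : tw_letter w 0 = Some LEnd) _ (tw_reach_refl _ _) => //=.
case: pickP => [s /andP [Hs Xs] | none].
  by rewrite drop0 in Xs; rewrite (comp_state0_unique unambM comp_q Hs Xs) Ei.
by have := none q0; rewrite Ei (comp_state_coacc comp_q (leq0n _)).
Qed.

Lemma simulator_weight_comp : tw_has_weight S w (ow_weight M w).
Proof.
have [i0 Ei R0] := reach_start.
have [cs1 E1] := run_follow (leq0n n).
case Er: ow_run (comp_run comp_q) => [y|] // _.
have Ey : ow_run (cs 0) (drop 0 w) (drop 0 qs) = Some y by rewrite !drop0 Er.
rewrite Ey in E1; have [cs E] := tw_reach_run R0 E1.
rewrite (ow_weight_comp unambM comp_q) /ow_comp_weight Ei Er.
exact: simulator_has_weight E.
Qed.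

End FollowComputation.

Lemma simulator_weight_none :
  (forall q (t : n.-tuple P), ~~ isSome (ow_comp_weight w q t)) ->
  tw_has_weight S w (ow_weight M w).
Proof.
move=> none.
have -> : ow_weight M w = 0.
  rewrite /ow_weight big1 // => q _; apply: big1 => t _.
  by move: (none q t); case: ow_comp_weight.
have R : reach (Scan M, 1%N) (Zero M, n.+1) (1 * (0 * 1)).
  have drift := reach_drift (s := Zero M) (fun _ => erefl) (leq0n n).
  apply: tw_reach_trans reach_scan_sweep _.
  apply: reach_right (_ : tw_letter w 0 = Some LEnd) _ drift => //=.
  case: pickP => // s /andP [Hs /coaccP [rs Hrs]]; exfalso.
  rewrite drop0 in Hrs; have size_rs : size rs == size w by rewrite (ow_run_size Hrs).
  by have := none s (Tuple size_rs); rewrite ow_comp_weightE Hs /= Hrs.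
have run_end : @tw_run K A S w (Zero M, n.+1) [::] = Some 1.
  by rewrite /= eqxx.
have [cs E] := tw_reach_run R run_end.
by rewrite !(mul0r, mul1r) in E; apply: simulator_has_weight E.
Qed.

End Simulation.

Theorem mainTheorem5 (K : pzSemiRingType) (A : finType) (M : oneway K A) :
  unambiguous M ->
  exists M' : twoway K A,
    deterministic M' /\ forall w : seq A, tw_has_weight M' w (ow_weight M w).
Proof.
move=> unambM; exists (simulator M); split=> [|w]; first exact: simulator_deterministic.
case: (pickP (fun qt : ow_state M * (size w).-tuple (ow_state M) =>
                isSome (ow_comp_weight w qt.1 qt.2))) => [[q0 t] /= comp_q | none].
  exact: (simulator_weight_comp unambM comp_q).
by apply: simulator_weight_none => q t; rewrite (none (q, t)).
Qed.
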